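(* Let $\mathbf{T}$ be the dappled triangular grid. For any vertex $v$ of $\mathbf{T}$, if $u_1$ and $u_2$ are distinct neighbors of $v$, then $(\psi_{\mathbf{T}}(u_1),\varphi_{\mathbf{T}}(u_1))\neq(\psi_{\mathbf{T}}(u_2),\varphi_{\mathbf{T}}(u_2))$. Consequently, for any connected dappled graph $G$ and any vertex $x\in V(G)$, if $f_1,f_2:V(G)\to V(\mathbf{T})$ are homomorphisms of dappled graphs with $f_1(x)=f_2(x)$, then $f_1=f_2$.
   Context: A hued graph is a graph $G$ together with a proper coloring $\psi_G:V(G)\to\mathbb{Z}_3$ (the hue). A dappled graph is a hued graph $G$ together with a proper coloring $\varphi_G:V(G)\to\mathbb{Z}_2^2$ (the color). A homomorphism of dappled graphs $f:V(G)\to V(H)$ maps edges to edges and satisfies $\psi_H(f(v))=\psi_G(v)$ and $\varphi_H(f(v))=\varphi_G(v)$ for all $v$. The dappled triangular grid $\mathbf{T}$ has vertex set $\mathbb{Z}^2$, with $(i_1,j_1)$ and $(i_2,j_2)$ adjacent iff $(i_2-i_1,j_2-j_1)\in\{\pm(1,0),\pm(0,1),\pm(1,1)\}$, hue $\psi_{\mathbf{T}}(i,j)=(i+j)\bmod 3$ and color $\varphi_{\mathbf{T}}(i,j)=(i\bmod 2, j\bmod 2)$. *)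

From Stdlib Require Import Relations.
From mathcomp Require Import all_boot all_order all_algebra.
Set Implicit Arguments. Unset Strict Implicit. Unset Printing Implicit Defensive.
Import GRing.Theory Num.Theory.
Local Open Scope ring_scope.

Definition Tvert := (int * int)%type.

Definition T_adj (u v : Tvert) : Prop :=
  let di := v.1 - u.1 in let dj := v.2 - u.2 in
     (di = 1 /\ dj = 0) \/ (di = -1 /\ dj = 0)
  \/ (di = 0 /\ dj = 1) \/ (di = 0 /\ dj = -1)
  \/ (di = 1 /\ dj = 1) \/ (di = -1 /\ dj = -1).

Definition T_hue (u : Tvert) : 'Z_3 := (u.1 + u.2)%:~R.

Definition T_color (u : Tvert) : 'Z_2 * 'Z_2 := (u.1%:~R, u.2%:~R).

Definition simple_graph (V : Type) (adj : V -> V -> Prop) : Prop :=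
  (forall u v, adj u v -> adj v u) /\ (forall v, ~ adj v v).

Definition proper_coloring (V C : Type) (adj : V -> V -> Prop) (c : V -> C) : Prop :=
  forall u v, adj u v -> c u <> c v.

Definition connected (V : Type) (adj : V -> V -> Prop) : Prop :=
  forall x y, clos_refl_trans V adj x y.

Definition dappled_hom_to_T (V : Type) (adj : V -> V -> Prop)
    (psi : V -> 'Z_3) (phi : V -> 'Z_2 * 'Z_2) (f : V -> Tvert) : Prop :=
  (forall u v, adj u v -> T_adj (f u) (f v)) /\
  (forall v, T_hue (f v) = psi v) /\
  (forall v, T_color (f v) = phi v).

(* The labelling u |-> (hue, colour) of T is additive on Z^2, and the six steps
   ±(1,0), ±(0,1), ±(1,1) get six distinct labels; so the neighbours of any
   vertex are told apart by their labels.  A homomorphism agreeing with another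
   one at x is then forced to agree at every neighbour of x, hence, by
   connectivity, everywhere. *)

From Stdlib Require Import Relations.
From mathcomp Require Import all_boot all_order all_algebra.

Set Implicit Arguments.
Unset Strict Implicit.
Unset Printing Implicit Defensive.

Import GRing.Theory Num.Theory.
Local Open Scope ring_scope.

Section Rigidity.

Variables (V W L : Type) (adjV : V -> V -> Prop) (adjW : W -> W -> Prop).
Variable label : W -> L.
Hypothesis label_inj_nbhd : forall w u1 u2,
  adjW w u1 -> adjW w u2 -> label u1 = label u2 -> u1 = u2.

Variables f1 f2 : V -> W.
Hypothesis f1_hom : forall u v, adjV u v -> adjW (f1 u) (f1 v).
Hypothesis f2_hom : forall u v, adjV u v -> adjW (f2 u) (f2 v).
Hypothesis label_f12 : forall v, label (f1 v) = label (f2 v).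

Lemma hom_eq_clos_refl_trans x y :
  clos_refl_trans V adjV x y -> f1 x = f2 x -> f1 y = f2 y.
Proof.
elim=> {x y} [x y adj_xy f12x | // | x y z _ IHxy _ IHyz f12x].
- apply: (label_inj_nbhd (f1_hom adj_xy)) => //.
  by rewrite f12x; exact: f2_hom.
- exact/IHyz/IHxy.
Qed.

End Rigidity.

Definition T_label (u : Tvert) := (T_hue u, T_color u).

Lemma T_labelB (u w : Tvert) : T_label (u - w) = T_label u - T_label w.
Proof.
rewrite /T_label /T_hue /T_color.
by congr (_, (_, _)); rewrite /= -?intrB // opprD addrACA.
Qed.

Definition T_steps : seq Tvert :=
  [:: (1, 0); (-1, 0); (0, 1); (0, -1); (1, 1); (-1, -1)].

Lemma T_adj_step (v u : Tvert) : T_adj v u -> u - v \in T_steps.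
Proof.
rewrite /T_adj; change (u - v) with (u.1 - v.1, u.2 - v.2).
move: (u.1 - v.1) (u.2 - v.2) => di dj.
by case=> [[-> ->]|[[-> ->]|[[-> ->]|[[-> ->]|[[-> ->]|[-> ->]]]]]].
Qed.

Lemma T_label_inj_steps : {in T_steps &, injective T_label}.
Proof.
have /allrelP inj_steps :
    allrel (fun d e => (T_label d == T_label e) ==> (d == e)) T_steps T_steps
  by [].
by move=> d e Td Te /eqP Ede; apply/eqP; exact: implyP (inj_steps d e Td Te) Ede.
Qed.

Lemma T_label_inj_nbhd (v u1 u2 : Tvert) :
  T_adj v u1 -> T_adj v u2 -> T_label u1 = T_label u2 -> u1 = u2.
Proof.
move=> /T_adj_step vu1 /T_adj_step vu2 Eu12.
apply: (subIr v); apply: T_label_inj_steps => //.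
by rewrite !T_labelB Eu12.
Qed.

Theorem mainTheorem3 :
  (forall v u1 u2 : Tvert, T_adj v u1 -> T_adj v u2 -> u1 <> u2 ->
     (T_hue u1, T_color u1) <> (T_hue u2, T_color u2)) /\
  (forall (V : Type) (adj : V -> V -> Prop)
          (psi : V -> 'Z_3) (phi : V -> 'Z_2 * 'Z_2),
     simple_graph adj -> proper_coloring adj psi -> proper_coloring adj phi ->
     connected adj ->
     forall (x : V) (f1 f2 : V -> Tvert),
       dappled_hom_to_T adj psi phi f1 -> dappled_hom_to_T adj psi phi f2 ->
       f1 x = f2 x -> forall v, f1 v = f2 v).
Proof.
split=> [v u1 u2 vu1 vu2 neq_u12 Eu12 | ].
  exact/neq_u12/(T_label_inj_nbhd vu1 vu2).
move=> V adj psi phi _ _ _ conn x f1 f2 [hom1 [hue1 col1]] [hom2 [hue2 col2]] f12x v.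
apply: (hom_eq_clos_refl_trans T_label_inj_nbhd hom1 hom2 _ (conn x v) f12x).
by move=> u; rewrite /T_label hue1 hue2 col1 col2.
Qed.
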